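(* Let $\mathcal M$ be a left $\mathcal A$-module and $N$ an $R$-submodule of $\mathcal M$. Then for every choice of $\vartheta$, \[ I_N = N\cap\sigma_\vartheta(N)=N\cap\tau_\vartheta(N). \] In particular, $N\cap\sigma_\vartheta(N)$ and $N\cap\tau_\vartheta(N)$ are $\mathcal A$-submodules of $\mathcal M$.
   Context: $R$ is a unital commutative ring and $\mathcal A$ an associative unital (not necessarily commutative) $R$-algebra. The symbol $\vartheta$ ranges over the four options ''left'', ''right'', ''pre-two-sided'', ''two-sided''. An $R$-submodule $J\subseteq\mathcal A$ is a left (resp. right; two-sided) Mathieu subspace of $\mathcal A$ if whenever $a\in\mathcal A$ satisfies $a^m\in J$ for all $m\ge1$, then for all $b,c\in\mathcal A$ there is $N_0\ge1$ with $ba^m\in J$ (resp. $a^mc\in J$; $ba^mc\in J$) for all $m\ge N_0$; it is a pre-two-sided Mathieu subspace if it is both a left and a right Mathieu subspace. A $\vartheta$-ideal means a left (resp. right; two-sided) ideal for $\vartheta$ = left (resp. right; two-sided), and a two-sided ideal for $\vartheta$ = pre-two-sided. All modules are left modules. For a left $\mathcal A$-module $\mathcal M$, $u\in\mathcal M$ and a subset $N\subseteq\mathcal M$, put $(N:u)=\{a\in\mathcal A: au\in N\}$. For an $R$-submodule $N$ of $\mathcal M$, $\sigma_\vartheta(N)$ is the set of $u\in\mathcal M$ such that $(N:u)$ is a $\vartheta$-ideal of $\mathcal A$, and $\tau_\vartheta(N)$ is the set of $u\in\mathcal M$ such that $(N:u)$ is a $\vartheta$-Mathieu subspace of $\mathcal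 A$. $I_N$ denotes the largest $\mathcal A$-submodule of $\mathcal M$ contained in $N$ (the sum of all $\mathcal A$-submodules of $\mathcal M$ contained in $N$). *)

From HB Require Import structures.
From mathcomp Require Import all_boot all_order all_algebra.
Set Implicit Arguments. Unset Strict Implicit. Unset Printing Implicit Defensive.
Import GRing.Theory.
Local Open Scope ring_scope.

Inductive theta := Left | Right | PreTwoSided | TwoSided.

Section Defs.
Variables (R : comPzRingType) (A : algType R) (M : lmodType A).

Definition is_Rsubmod (N : M -> Prop) : Prop :=
  [/\ N 0, (forall u v, N u -> N v -> N (u + v)) &
      (forall (r : R) u, N u -> N ((r *: (1 : A)) *: u))].

Definition is_Rsubspace (J : A -> Prop) : Prop :=
  [/\ J 0, (forall a b, J a -> J b -> J (a + b)) &
      (forall (r : R) a, J a -> J (r *: a))].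

Definition is_Asubmod (P : M -> Prop) : Prop :=
  [/\ P 0, (forall u v, P u -> P v -> P (u + v)) &
      (forall (a : A) u, P u -> P (a *: u))].

Definition is_left_ideal (J : A -> Prop) : Prop :=
  [/\ J 0, (forall a b, J a -> J b -> J (a + b)) &
      (forall c a, J a -> J (c * a))].

Definition is_right_ideal (J : A -> Prop) : Prop :=
  [/\ J 0, (forall a b, J a -> J b -> J (a + b)) &
      (forall c a, J a -> J (a * c))].

Definition is_twosided_ideal (J : A -> Prop) : Prop :=
  is_left_ideal J /\ is_right_ideal J.

Definition is_theta_ideal (th : theta) (J : A -> Prop) : Prop :=
  match th with
  | Left => is_left_ideal J
  | Right => is_right_ideal J
  | PreTwoSided | TwoSided => is_twosided_ideal J
  end.

Definition all_powers_in (J : A -> Prop) (a : A) : Prop :=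
  forall m : nat, (1 <= m)%N -> J (a ^+ m).

Definition is_left_MS (J : A -> Prop) : Prop :=
  is_Rsubspace J /\
  forall a, all_powers_in J a -> forall b c : A,
    exists N0 : nat, (1 <= N0)%N /\ forall m : nat, (N0 <= m)%N -> J (b * a ^+ m).

Definition is_right_MS (J : A -> Prop) : Prop :=
  is_Rsubspace J /\
  forall a, all_powers_in J a -> forall b c : A,
    exists N0 : nat, (1 <= N0)%N /\ forall m : nat, (N0 <= m)%N -> J (a ^+ m * c).

Definition is_twosided_MS (J : A -> Prop) : Prop :=
  is_Rsubspace J /\
  forall a, all_powers_in J a -> forall b c : A,
    exists N0 : nat, (1 <= N0)%N /\ forall m : nat, (N0 <= m)%N -> J (b * a ^+ m * c).

Definition is_pretwosided_MS (J : A -> Prop) : Prop :=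
  is_left_MS J /\ is_right_MS J.

Definition is_theta_MS (th : theta) (J : A -> Prop) : Prop :=
  match th with
  | Left => is_left_MS J
  | Right => is_right_MS J
  | PreTwoSided => is_pretwosided_MS J
  | TwoSided => is_twosided_MS J
  end.

Definition colon (N : M -> Prop) (u : M) : A -> Prop := fun a => N (a *: u).

Definition sigma_th (th : theta) (N : M -> Prop) : M -> Prop :=
  fun u => is_theta_ideal th (colon N u).

Definition tau_th (th : theta) (N : M -> Prop) : M -> Prop :=
  fun u => is_theta_MS th (colon N u).

(* I_N: the sum of all A-submodules of M contained in N, i.e. the smallest
   A-submodule containing every A-submodule P contained in N. *)
Definition I_N (N : M -> Prop) : M -> Prop :=
  fun u => forall Q : M -> Prop, is_Asubmod Q ->
    (forall P : M -> Prop, is_Asubmod P -> (forall v, P v -> N v) ->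
       forall v, P v -> Q v) -> Q u.

End Defs.

(* For [u] in [N], the unit [1] lies in [(N : u)]. A ϑ-ideal containing [1] is all of [A], and so
   is a ϑ-Mathieu subspace containing [1]: every power of [1] is [1], so [b * 1 ^+ m] (resp.
   [1 ^+ m * c], [b * 1 ^+ m * c]) lies in it for large [m]. Hence both [N ∩ σ_ϑ(N)] and
   [N ∩ τ_ϑ(N)] consist of the [u] with [A u ⊆ N], and this set is the largest A-submodule
   contained in [N], i.e. [I_N]. *)
From mathcomp Require Import all_boot all_order all_algebra.
Set Implicit Arguments. Unset Strict Implicit.
Import GRing.Theory.
Local Open Scope ring_scope.

Section ThetaSubspaces.
Variables (R : comPzRingType) (A : algType R).
Implicit Types (J : A -> Prop) (th : theta).

Lemma theta_ideal1 th J : is_theta_ideal th J -> J 1 -> forall a, J a.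
Proof.
have left_ideal1 : is_left_ideal J -> J 1 -> forall a, J a.
  by move=> [_ _ JM] J1 a; have := JM a 1 J1; rewrite mulr1.
case: th => /= [//|[_ _ JM] J1 a|[Jl _]|[Jl _]]; try exact: left_ideal1.
by have := JM a 1 J1; rewrite mul1r.
Qed.

Lemma theta_idealT th J : (forall a, J a) -> is_theta_ideal th J.
Proof.
move=> JT; have Jl : is_left_ideal J by [].
have Jr : is_right_ideal J by [].
by case: th.
Qed.

Lemma all_powers_in1 J : J 1 -> all_powers_in J 1.
Proof. by move=> J1 m _; rewrite expr1n. Qed.

Lemma theta_MS1 th J : is_theta_MS th J -> J 1 -> forall a, J a.
Proof.
move=> JMS /all_powers_in1 J1 a.
have left_MS1 : is_left_MS J -> J a.
  move=> [_ JM]; have [n [_ Jn]] := JM 1 J1 a a.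
  by have := Jn n (leqnn n); rewrite expr1n mulr1.
case: th JMS => /= [//|[_ JM]|[/left_MS1 //]|[_ JM]].
- have [n [_ Jn]] := JM 1 J1 a a.
  by have := Jn n (leqnn n); rewrite expr1n mul1r.
- have [n [_ Jn]] := JM 1 J1 a 1.
  by have := Jn n (leqnn n); rewrite expr1n !mulr1.
Qed.

Lemma theta_MST th J : (forall a, J a) -> is_theta_MS th J.
Proof.
move=> JT; have Js : is_Rsubspace J by [].
have eventually_in (P : nat -> A) : exists n, (1 <= n)%N /\ forall m, (n <= m)%N -> J (P m).
  by exists 1%N.
have Jl : is_left_MS J by split=> // *; apply: eventually_in.
have Jr : is_right_MS J by split=> // *; apply: eventually_in.
have Jt : is_twosided_MS J by split=> // *; apply: eventually_in.
by case: th.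
Qed.

End ThetaSubspaces.

Section SubmoduleCore.
Variables (R : comPzRingType) (A : algType R) (M : lmodType A).
Variable N : M -> Prop.
Implicit Types (P : M -> Prop) (u : M) (th : theta).

Definition submod_core u := forall a : A, N (a *: u).

Lemma submod_core_sub u : submod_core u -> N u.
Proof. by move/(_ 1); rewrite scale1r. Qed.

Lemma submod_core_max P : is_Asubmod P -> (forall u, P u -> N u) ->
  forall u, P u -> submod_core u.
Proof. by move=> [_ _ PZ] PN u Pu a; apply/PN/PZ. Qed.

Lemma submod_core_Asubmod : is_Rsubmod N -> is_Asubmod submod_core.
Proof.
case=> N0 ND _; split.
- by move=> a; rewrite scaler0.
- by move=> u v Nu Nv a; rewrite scalerDr; apply: ND.
- by move=> a u Nu b; rewrite scalerA.
Qed.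

Lemma I_N_core : is_Rsubmod N -> forall u, I_N N u <-> submod_core u.
Proof.
move=> hN u; have coreM := submod_core_Asubmod hN; split.
- by apply; last exact: submod_core_max.
- move=> coreu Q _ maxQ; apply: maxQ coreu => //.
  exact: submod_core_sub.
Qed.

Lemma colon1 u : N u -> colon N u 1.
Proof. by rewrite /colon scale1r. Qed.

Lemma sigma_core th u : N u /\ sigma_th th N u <-> submod_core u.
Proof.
split=> [[/colon1 Nu1 Iu]|coreu]; first exact: theta_ideal1 Iu Nu1.
by split; [exact: submod_core_sub | exact: theta_idealT].
Qed.

Lemma tau_core th u : N u /\ tau_th th N u <-> submod_core u.
Proof.
split=> [[/colon1 Nu1 MSu]|coreu]; first exact: theta_MS1 MSu Nu1.
by split; [exact: submod_core_sub | exact: theta_MST].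
Qed.

End SubmoduleCore.

Lemma is_Asubmod_ext (R : comPzRingType) (A : algType R) (M : lmodType A)
    (P Q : M -> Prop) :
  (forall u, P u <-> Q u) -> is_Asubmod P -> is_Asubmod Q.
Proof.
move=> PQ [P0 PD PZ]; split.
- exact/PQ.
- by move=> u v /PQ Pu /PQ Pv; apply/PQ/PD.
- by move=> a u /PQ Pu; apply/PQ/PZ.
Qed.

Theorem theorem3p11 (R : comPzRingType) (A : algType R) (M : lmodType A)
  (N : M -> Prop) (hN : is_Rsubmod N) (th : theta) :
  (forall u, I_N N u <-> (N u /\ sigma_th th N u)) /\
  (forall u, I_N N u <-> (N u /\ tau_th th N u)) /\
  is_Asubmod (fun u => N u /\ sigma_th th N u) /\
  is_Asubmod (fun u => N u /\ tau_th th N u).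
Proof.
have coreM := submod_core_Asubmod hN.
have I_N_sigma u : I_N N u <-> N u /\ sigma_th th N u.
  by apply: iff_trans (I_N_core hN u) _; apply: iff_sym; exact: sigma_core.
have I_N_tau u : I_N N u <-> N u /\ tau_th th N u.
  by apply: iff_trans (I_N_core hN u) _; apply: iff_sym; exact: tau_core.
split; [exact: I_N_sigma | split; [exact: I_N_tau | split]].
- by apply: is_Asubmod_ext coreM => u; apply: iff_sym; exact: sigma_core.
- by apply: is_Asubmod_ext coreM => u; apply: iff_sym; exact: tau_core.
Qed.
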